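(* Let $\varphi=(1+\sqrt5)/2$ and let $s_Z$ be the Zeckendorf sum of digits function. Let $I_Z=(I_Z(n))_{n\ge1}$ be the increasing enumeration of the points of increase of $s_Z$, let $C_Z=(C_Z(n))_{n\ge1}$ be the increasing enumeration of the points of constancy of $s_Z$, and let $D_Z=(D_Z(n))_{n\ge1}$ be defined by $D_Z(1)=-1$ and, for $n\ge1$, $D_Z(n+1)$ is the $n$-th smallest point of decrease of $s_Z$. Then: (i) $I_Z(n)=\lfloor n\varphi\rfloor+n-2$ for all $n\ge1$; (ii) the set of points of constancy of $s_Z$ equals $\{2\lfloor n\varphi\rfloor+n-2:\ n\ge1\}\cup\{3\lfloor n\varphi\rfloor+2n-3:\ n\ge1\}$, i.e. $C_Z$ is the increasing enumeration of this union; (iii) $D_Z(n)=2\lfloor n\varphi\rfloor+n-4$ for all $n\ge1$.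
   Context: Fibonacci numbers: $F_0=0$, $F_1=1$, $F_n=F_{n-1}+F_{n-2}$ for $n\ge2$. Every integer $N\ge0$ can be written uniquely (ignoring leading zeros) as $N=\sum_{i\ge0}d_i(N)F_{i+2}$ with digits $d_i(N)\in\{0,1\}$ such that no two consecutive digits $d_i,d_{i+1}$ are both $1$ (Zeckendorf expansion). The Zeckendorf sum of digits function is $s_Z(N)=\sum_{i\ge0}d_i(N)$ for $N\ge0$. With $\Delta s_Z(N)=s_Z(N+1)-s_Z(N)$, an integer $N\ge0$ is a point of increase, of constancy, or of decrease of $s_Z$ according as $\Delta s_Z(N)>0$, $=0$, or $<0$. *)

From Stdlib Require Import Reals Arith ZArith List.
Import ListNotations.

Fixpoint fib (n : nat) : nat :=
  match n with
  | 0 => 0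
  | S m => match m with
           | 0 => 1
           | S k => fib m + fib k
           end
  end.

Fixpoint topk (k N : nat) : nat :=
  match k with
  | 0 => 0
  | S k' => if fib k <=? N then k else topk k' N
  end.

(* index of the largest Fibonacci number F_k (k >= 2) not exceeding N >= 1;
   since F_(N+2) > N, searching from N+2 downward suffices. *)
Definition ztop (N : nat) : nat := topk (S (S N)) N.

(* Number of nonzero digits of the Zeckendorf expansion, computed by the
   greedy algorithm (which produces exactly the Zeckendorf expansion):
   repeatedly subtract the largest Fibonacci number F_k <= N.
   Each step decreases N by at least 1, so fuel N suffices. *)
Fixpoint sZ_aux (fuel N : nat) : nat :=
  match fuel with
  | 0 => 0
  | S f => match N with
           | 0 => 0
           | S _ => S (sZ_aux f (N - fib (ztop N)))
           end
  end.

Definition sZ (N : nat) : nat := sZ_aux N N.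

Definition incr_pt (N : nat) : bool := sZ N <? sZ (S N).
Definition const_pt (N : nat) : bool := sZ (S N) =? sZ N.
Definition decr_pt (N : nat) : bool := sZ (S N) <? sZ N.

Definition is_nth_smallest (P : nat -> bool) (n x : nat) : Prop :=
  P x = true /\ length (filter P (seq 0 x)) = (n - 1)%nat.

Open Scope R_scope.

Definition phi : R := (1 + sqrt 5) / 2.

(* floor of a real number (Stdlib's Int_part r = up r - 1 = floor r) *)
Definition floorR (x : R) : Z := Int_part x.

Close Scope R_scope.

(* Let i be the smallest index in the Zeckendorf expansion of N + 1.  Passing
   from N to N + 1 adds the digit F_2 when i = 2, trades one digit for one when
   i = 3 or 4, and loses at least one digit when i >= 5.  The numbers whose
   indices are all >= k + 2 are exactly the k-fold images of the shift
   sigma (sum F_a) = sum F_(a+1), which satisfies sigma (sigma n) = sigma n + n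
   and sigma n = floor ((n + 1) phi) - 1, because sum F_(a+1) - phi sum F_a
   = sum (-1/phi)^a lies strictly between -1/phi^2 and 1/phi.  The three cases
   thus become the Beatty-type sequences of the statement. *)

From Stdlib Require Import Reals Arith ZArith List Lra Lia.
Import ListNotations.

Lemma fib_SS n : fib (S (S n)) = fib (S n) + fib n.
Proof. reflexivity. Qed.

Lemma fib_pos n : 0 < n -> 0 < fib n.
Proof.
  intros Hn. induction n as [n IH] using lt_wf_ind.
  destruct n as [|[|n]]; [lia|cbn; lia|].
  rewrite fib_SS. specialize (IH (S n)). lia.
Qed.

Lemma fib_le_S n : fib n <= fib (S n).
Proof. destruct n; [cbn; lia|]. rewrite fib_SS. lia. Qed.

Lemma fib_mono m n : m <= n -> fib m <= fib n.
Proof. induction 1 as [|n _ IH]; [lia|]. pose proof (fib_le_S n). lia. Qed.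

Lemma fib_lt_inv m n : fib m < fib n -> m < n.
Proof.
  intros H. destruct (Nat.lt_ge_cases m n) as [|Hnm]; [easy|].
  apply fib_mono in Hnm. lia.
Qed.

Lemma lt_fib_SS n : n < fib (S (S n)).
Proof.
  induction n; [cbn; lia|]. rewrite fib_SS. pose proof (fib_pos (S n)). lia.
Qed.

Definition fibsum (l : list nat) : nat := list_sum (map fib l).

Lemma fibsum_cons a l : fibsum (a :: l) = fib a + fibsum l.
Proof. reflexivity. Qed.

Lemma fibsum_app l t : fibsum (l ++ t) = fibsum l + fibsum t.
Proof. unfold fibsum. rewrite map_app. apply list_sum_app. Qed.

Lemma fib_le_fibsum l y : In y l -> fib y <= fibsum l.
Proof.
  induction l as [|a l IH]; [easy|]. rewrite fibsum_cons.
  intros [->|Hy]; [lia|]. specialize (IH Hy). lia.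
Qed.

(* Index lists [a_1; a_2; ...] of Zeckendorf expansions F_(a_1) + F_(a_2) + ...,
   largest index first (the paper's digit d_i sits at index i + 2). *)
Inductive admissible : list nat -> Prop :=
| admissible_nil : admissible []
| admissible_cons a l : 2 <= a -> (forall y, In y l -> y + 2 <= a) ->
    admissible l -> admissible (a :: l).

Lemma admissible_ge2 l y : admissible l -> In y l -> 2 <= y.
Proof. induction 1; cbn; [easy|]. intros [->|Hy]; auto. Qed.

Lemma admissible_single i : 2 <= i -> admissible [i].
Proof. constructor; [easy|easy|constructor]. Qed.

Lemma admissible_app l t : admissible l -> admissible t ->
  (forall x y, In x l -> In y t -> y + 2 <= x) -> admissible (l ++ t).
Proof.
  induction 1 as [|a l Ha Hgap Hl IH]; intros Ht Hlt; [easy|].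
  constructor; [easy| |apply IH; auto; intros; apply Hlt; cbn; auto].
  intros y Hy. apply in_app_or in Hy as [Hy|Hy]; [auto|]. apply Hlt; cbn; auto.
Qed.

Lemma admissible_app_inv l t : admissible (l ++ t) ->
  admissible l /\ admissible t /\ (forall x y, In x l -> In y t -> y + 2 <= x).
Proof.
  induction l as [|a l IH]; cbn; intros H.
  - repeat split; [constructor|easy|easy].
  - inversion H as [|? ? Ha Hgap Hlt]; subst.
    destruct (IH Hlt) as (Hl & Ht & Hgaps). repeat split; [|easy|].
    + constructor; auto. intros y Hy. apply Hgap, in_or_app; auto.
    + intros x y [<-|Hx] Hy; auto. apply Hgap, in_or_app; auto.
Qed.

Lemma admissible_map f l : admissible l ->
  (forall x, In x l -> 2 <= f x) ->
  (forall x y, In x l -> In y l -> y + 2 <= x -> f y + 2 <= f x) ->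
  admissible (map f l).
Proof.
  induction 1 as [|a l Ha Hgap Hl IH]; intros Hf2 Hfgap; cbn; constructor.
  - apply Hf2; cbn; auto.
  - intros y' Hy'. apply in_map_iff in Hy' as (y & <- & Hy).
    apply Hfgap; cbn; auto.
  - apply IH; [intros; apply Hf2|intros; apply Hfgap]; cbn; auto.
Qed.

Lemma fibsum_lt_fib l K : admissible l -> 0 < K ->
  (forall y, In y l -> y < K) -> fibsum l < fib K.
Proof.
  intros Hl. revert K.
  induction Hl as [|a l Ha Hgap Hl IH]; intros K HK Hlt.
  - pose proof (fib_pos K HK). cbn. lia.
  - assert (HaK : a < K) by (apply Hlt; cbn; auto).
    assert (Htail : fibsum l < fib (a - 1)).
    { apply IH; [lia|]. intros y Hy. specialize (Hgap y Hy). lia. }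
    destruct a as [|[|b]]; [lia|lia|].
    pose proof (fib_mono (S (S (S b))) K HaK) as HfK. rewrite (fib_SS (S b)) in HfK.
    rewrite fibsum_cons. replace (S (S b) - 1) with (S b) in Htail by lia. lia.
Qed.

Lemma fibsum_head a l : admissible (a :: l) ->
  fib a <= fibsum (a :: l) < fib (S a).
Proof.
  intros H. rewrite fibsum_cons. split; [lia|].
  rewrite <- fibsum_cons. apply fibsum_lt_fib; [easy|lia|].
  inversion H as [|? ? Ha Hgap]; subst.
  intros y [<-|Hy]; [lia|]. specialize (Hgap y Hy). lia.
Qed.

Lemma admissible_fibsum_inj l t : admissible l -> admissible t ->
  fibsum l = fibsum t -> l = t.
Proof.
  intros Hl. revert t.
  induction Hl as [|a l Ha Hgap Hl IH]; intros [|b t] Ht Heq; auto.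
  - inversion Ht; subst. pose proof (fib_pos b). rewrite fibsum_cons in Heq. cbn in Heq. lia.
  - pose proof (fib_pos a). rewrite fibsum_cons in Heq. cbn in Heq. lia.
  - assert (Hal : admissible (a :: l)) by (constructor; auto).
    pose proof (fibsum_head _ _ Hal). pose proof (fibsum_head _ _ Ht).
    assert (a = b).
    { assert (a < S b) by (apply fib_lt_inv; lia).
      assert (b < S a) by (apply fib_lt_inv; lia). lia. }
    subst b. inversion Ht; subst. rewrite !fibsum_cons in Heq.
    f_equal. apply IH; auto. lia.
Qed.

Lemma topk_spec k N :
  (forall j, topk k N < j <= k -> N < fib j) /\ topk k N <= k /\
  (topk k N = 0 \/ fib (topk k N) <= N).
Proof.
  induction k as [|k IH]; cbn [topk]; [split; [lia|auto]|].
  destruct (fib (S k) <=? N) eqn:E.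
  - apply Nat.leb_le in E. split; [lia|auto].
  - apply Nat.leb_gt in E. destruct IH as (Hgt & Hle & Htop).
    repeat split; auto.
    intros j Hj. destruct (Nat.eq_dec j (S k)) as [->|]; auto. apply Hgt. lia.
Qed.

Lemma ztop_spec N : 0 < N ->
  2 <= ztop N /\ fib (ztop N) <= N < fib (S (ztop N)).
Proof.
  intros HN. unfold ztop. destruct (topk_spec (S (S N)) N) as (Hgt & Hle & Htop).
  set (k := topk (S (S N)) N) in *.
  assert (k <> 0) by (intros Hk; specialize (Hgt 1); rewrite Hk in Hgt; cbn in Hgt; lia).
  assert (k <> 1) by (intros Hk; specialize (Hgt 2); rewrite Hk in Hgt; cbn in Hgt; lia).
  assert (k <> S (S N)).
  { intros Hk. pose proof (lt_fib_SS N). rewrite Hk in Htop. lia. }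
  destruct Htop as [|Htop]; [easy|]. repeat split; auto; [lia|]. apply Hgt. lia.
Qed.

Fixpoint zeck_aux (fuel N : nat) : list nat :=
  match fuel with
  | 0 => []
  | S f => match N with
           | 0 => []
           | S _ => ztop N :: zeck_aux f (N - fib (ztop N))
           end
  end.

Definition zeck (N : nat) : list nat := zeck_aux N N.

Lemma sZ_length_zeck N : sZ N = length (zeck N).
Proof.
  unfold sZ, zeck. generalize N at 1 3 as f. intros f. revert N.
  induction f as [|f IH]; intros M; cbn; auto. destruct M; cbn; auto.
Qed.

Lemma zeck_aux_spec f N : N <= f ->
  admissible (zeck_aux f N) /\ fibsum (zeck_aux f N) = N.
Proof.
  revert N. induction f as [|f IH]; intros N HN; cbn [zeck_aux].
  - replace N with 0 by lia. split; [constructor|easy].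
  - destruct N as [|n]; [split; [constructor|easy]|].
    destruct (ztop_spec (S n)) as (Hk2 & Hle & Hlt); [lia|].
    set (k := ztop (S n)) in *. pose proof (fib_pos k).
    destruct (IH (S n - fib k)) as [Hadm Hsum]; [lia|].
    destruct k as [|[|b]]; [lia|lia|]. rewrite fib_SS in Hlt.
    rewrite fibsum_cons. split; [|lia].
    constructor; auto. intros y Hy.
    pose proof (fib_le_fibsum _ _ Hy) as Hfy. rewrite Hsum in Hfy.
    assert (y < S b) by (apply fib_lt_inv; lia). lia.
Qed.

Lemma admissible_zeck N : admissible (zeck N).
Proof. apply zeck_aux_spec; lia. Qed.

Lemma fibsum_zeck N : fibsum (zeck N) = N.
Proof. apply zeck_aux_spec; lia. Qed.

Lemma zeck_fibsum l : admissible l -> zeck (fibsum l) = l.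
Proof.
  intros Hl. apply admissible_fibsum_inj; auto using admissible_zeck, fibsum_zeck.
Qed.

Lemma sZ_fibsum l : admissible l -> sZ (fibsum l) = length l.
Proof. intros Hl. rewrite sZ_length_zeck, zeck_fibsum; auto. Qed.

Lemma zeck_lt_fib N K y : N < fib K -> In y (zeck N) -> y < K.
Proof.
  intros HN Hy. apply fib_lt_inv. pose proof (fib_le_fibsum _ _ Hy) as Hfy.
  rewrite fibsum_zeck in Hfy. lia.
Qed.

Lemma zeck_nil_iff N : zeck N = [] <-> N = 0.
Proof.
  split; [|intros ->; reflexivity].
  intros H. rewrite <- (fibsum_zeck N), H. reflexivity.
Qed.

Definition zshift (n : nat) : nat := fibsum (map S (zeck n)).

Lemma admissible_shift k l : admissible l -> admissible (map (Nat.add k) l).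
Proof.
  intros Hl. apply admissible_map; auto.
  - intros x Hx. pose proof (admissible_ge2 _ _ Hl Hx). lia.
  - intros; lia.
Qed.

Lemma zeck_iter_zshift k m : zeck (Nat.iter k zshift m) = map (Nat.add k) (zeck m).
Proof.
  induction k as [|k IH].
  - symmetry. apply map_id.
  - rewrite Nat.iter_succ. unfold zshift at 1. rewrite IH, map_map.
    apply zeck_fibsum, (admissible_shift (S k)), admissible_zeck.
Qed.

Lemma zeck_zshift n : zeck (zshift n) = map S (zeck n).
Proof. exact (zeck_iter_zshift 1 n). Qed.

Lemma fibsum_map_SS l : fibsum (map S (map S l)) = fibsum (map S l) + fibsum l.
Proof.
  induction l as [|a l IH]; [reflexivity|].
  cbn [map]. rewrite !fibsum_cons, fib_SS. lia.
Qed.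

Lemma zshift_zshift n : zshift (zshift n) = zshift n + n.
Proof.
  unfold zshift at 1. rewrite zeck_zshift, fibsum_map_SS, fibsum_zeck. reflexivity.
Qed.

Lemma zeck_iter_zshift_ge k m x : In x (zeck (Nat.iter k zshift m)) -> k + 2 <= x.
Proof.
  rewrite zeck_iter_zshift. intros (y & <- & Hy)%in_map_iff.
  pose proof (admissible_ge2 _ _ (admissible_zeck m) Hy). lia.
Qed.

Lemma iter_zshift_image k l : admissible l -> (forall x, In x l -> k + 2 <= x) ->
  exists m, fibsum l = Nat.iter k zshift m.
Proof.
  intros Hl Hk. set (l' := map (fun x => x - k) l).
  assert (Hl' : admissible l').
  { apply admissible_map; auto.
    - intros x Hx. specialize (Hk x Hx). cbn. lia.
    - intros x y Hx Hy Hxy. specialize (Hk y Hy). cbn. lia. }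
  exists (fibsum l').
  rewrite <- (fibsum_zeck (Nat.iter k zshift (fibsum l'))), zeck_iter_zshift,
    (zeck_fibsum _ Hl'); unfold l'; rewrite map_map.
  f_equal. rewrite <- (map_id l) at 1. apply map_ext_in.
  intros x Hx. specialize (Hk x Hx). lia.
Qed.

Lemma sZ_iter_zshift_add_fib k m j N : 2 <= j <= k ->
  N = Nat.iter k zshift m + fib j -> sZ N = S (sZ (Nat.iter k zshift m)).
Proof.
  intros Hj ->. set (L := zeck (Nat.iter k zshift m)).
  assert (Hadm : admissible (L ++ [j])).
  { apply admissible_app; [apply admissible_zeck|apply admissible_single; lia|].
    intros x y Hx [<-|[]]. pose proof (zeck_iter_zshift_ge _ _ _ Hx). lia. }
  replace (Nat.iter k zshift m + fib j) with (fibsum (L ++ [j]))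
    by (unfold L; rewrite fibsum_app, fibsum_zeck; cbn; lia).
  rewrite sZ_fibsum, length_app, sZ_length_zeck by easy.
  unfold L. cbn. lia.
Qed.

(* For the smallest index i >= 5, F_i - 1 = F_(i-1) + (F_(i-2) - 1) and the
   last summand is nonzero, so one digit is traded for at least two. *)
Lemma sZ_lt_pred N : 0 < N -> (forall x, In x (zeck N) -> 5 <= x) ->
  sZ N < sZ (pred N).
Proof.
  intros HN Hge.
  assert (Hne : zeck N <> []) by (rewrite zeck_nil_iff; lia).
  destruct (exists_last Hne) as (h & i & Hhi).
  pose proof (admissible_zeck N) as Hadm. rewrite Hhi in Hadm.
  destruct (admissible_app_inv _ _ Hadm) as (Hh & _ & Hgap).
  assert (Hi : 5 <= i) by (apply Hge; rewrite Hhi; apply in_or_app; cbn; auto).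
  set (t := zeck (fib (i - 2) - 1)).
  assert (Hfib : 2 <= fib (i - 2)) by (apply (fib_mono 3); lia).
  assert (Ht_lt : forall y, In y t -> y < i - 2) by (intros y; apply zeck_lt_fib; lia).
  assert (Ht_ne : t <> []) by (unfold t; rewrite zeck_nil_iff; lia).
  assert (Hpred : pred N = fibsum (h ++ (i - 1) :: t)).
  { unfold t. rewrite <- (fibsum_zeck N), Hhi, !fibsum_app, !fibsum_cons, fibsum_zeck.
    replace i with (S (S (i - 2))) at 1 by lia. rewrite fib_SS.
    replace (S (i - 2)) with (i - 1) by lia. cbn. lia. }
  assert (Hadm' : admissible (h ++ (i - 1) :: t)).
  { apply admissible_app; auto.
    - constructor; [lia| |apply admissible_zeck].
      intros y Hy. specialize (Ht_lt y Hy). lia.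
    - intros x y Hx Hy. specialize (Hgap x i Hx (or_introl eq_refl)).
      destruct Hy as [<-|Hy]; [lia|]. specialize (Ht_lt y Hy). lia. }
  rewrite Hpred, sZ_fibsum, sZ_length_zeck, Hhi, !length_app by easy.
  destruct t; [easy|]. cbn. lia.
Qed.

Lemma zeck_S_cases N :
  (exists m, N = Nat.iter 2 zshift m) \/
  (exists m, N = S (Nat.iter 3 zshift m)) \/
  (exists m, N = S (S (Nat.iter 4 zshift m))) \/
  (exists m, S N = Nat.iter 3 zshift (S m)).
Proof.
  assert (Hne : zeck (S N) <> []) by (rewrite zeck_nil_iff; lia).
  destruct (exists_last Hne) as (h & i & Hhi).
  pose proof (admissible_zeck (S N)) as Hadm. rewrite Hhi in Hadm.
  destruct (admissible_app_inv _ _ Hadm) as (Hh & Hi & Hgap).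
  assert (Hi2 : 2 <= i) by (apply (admissible_ge2 _ _ Hi); cbn; auto).
  assert (Hhi_ge : forall x, In x h -> i + 2 <= x) by (intros x Hx; apply Hgap; cbn; auto).
  assert (Hsum : S N = fibsum h + fib i)
    by (rewrite <- (fibsum_zeck (S N)), Hhi, fibsum_app; cbn; lia).
  destruct (Nat.lt_ge_cases i 5) as [Hi5|Hi5].
  - assert (Himage : forall k, k + 2 <= i + 2 -> exists m, fibsum h = Nat.iter k zshift m).
    { intros k Hk. apply iter_zshift_image; auto.
      intros x Hx. specialize (Hhi_ge x Hx). lia. }
    destruct i as [|[|[|[|[|]]]]]; try lia; cbn [fib] in Hsum.
    + left. destruct (Himage 2) as [m Hm]; [lia|]. exists m. lia.
    + right; left. destruct (Himage 3) as [m Hm]; [lia|]. exists m. lia.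
    + right; right; left. destruct (Himage 4) as [m Hm]; [lia|]. exists m. lia.
  - right; right; right.
    destruct (iter_zshift_image 3 (h ++ [i])) as [[|m] Hm]; auto.
    + intros x [Hx|[<-|[]]]%in_app_or; [specialize (Hhi_ge x Hx)|]; lia.
    + rewrite fibsum_app in Hm. cbn in Hm. lia.
    + exists m. rewrite <- Hm, fibsum_app. cbn. lia.
Qed.

Lemma sZ_S_iter2 m : sZ (S (Nat.iter 2 zshift m)) = S (sZ (Nat.iter 2 zshift m)).
Proof. apply (sZ_iter_zshift_add_fib 2 m 2); cbn [fib]; lia. Qed.

Lemma sZ_S_iter3 m : sZ (S (S (Nat.iter 3 zshift m))) = sZ (S (Nat.iter 3 zshift m)).
Proof.
  rewrite (sZ_iter_zshift_add_fib 3 m 3), (sZ_iter_zshift_add_fib 3 m 2 (S _));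
    cbn [fib]; lia.
Qed.

Lemma sZ_S_iter4 m : sZ (S (S (S (Nat.iter 4 zshift m)))) = sZ (S (S (Nat.iter 4 zshift m))).
Proof.
  rewrite (sZ_iter_zshift_add_fib 4 m 4), (sZ_iter_zshift_add_fib 4 m 3 (S (S _)));
    cbn [fib]; lia.
Qed.

Lemma sZ_S_lt N m : S N = Nat.iter 3 zshift m -> sZ (S N) < sZ N.
Proof.
  intros HN. apply (sZ_lt_pred (S N)); [lia|].
  rewrite HN. intros x Hx. pose proof (zeck_iter_zshift_ge _ _ _ Hx). lia.
Qed.

Lemma incr_pt_iff N : incr_pt N = true <-> exists m, N = Nat.iter 2 zshift m.
Proof.
  unfold incr_pt. rewrite Nat.ltb_lt. split.
  - intros Hlt. destruct (zeck_S_cases N) as [|[[m ->]|[[m ->]|[m Hm]]]]; auto.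
    + rewrite sZ_S_iter3 in Hlt. lia.
    + rewrite sZ_S_iter4 in Hlt. lia.
    + pose proof (sZ_S_lt _ _ Hm). lia.
  - intros [m ->]. rewrite sZ_S_iter2. lia.
Qed.

Lemma const_pt_iff N : const_pt N = true <->
  (exists m, N = S (Nat.iter 3 zshift m)) \/ (exists m, N = S (S (Nat.iter 4 zshift m))).
Proof.
  unfold const_pt. rewrite Nat.eqb_eq. split.
  - intros Heq. destruct (zeck_S_cases N) as [[m ->]|[|[|[m Hm]]]]; auto.
    + rewrite sZ_S_iter2 in Heq. lia.
    + pose proof (sZ_S_lt _ _ Hm). lia.
  - intros [[m ->]|[m ->]]; [apply sZ_S_iter3|apply sZ_S_iter4].
Qed.

Lemma decr_pt_iff N : decr_pt N = true <-> exists m, S N = Nat.iter 3 zshift (S m).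
Proof.
  unfold decr_pt. rewrite Nat.ltb_lt. split.
  - intros Hlt. destruct (zeck_S_cases N) as [[m ->]|[[m ->]|[[m ->]|]]]; auto.
    + rewrite sZ_S_iter2 in Hlt. lia.
    + rewrite sZ_S_iter3 in Hlt. lia.
    + rewrite sZ_S_iter4 in Hlt. lia.
  - intros [m Hm]. exact (sZ_S_lt _ _ Hm).
Qed.

Lemma iter_zshift_2 m : Nat.iter 2 zshift m = zshift m + m.
Proof. apply zshift_zshift. Qed.

Lemma iter_zshift_3 m : Nat.iter 3 zshift m = 2 * zshift m + m.
Proof.
  change (zshift (zshift (zshift m)) = 2 * zshift m + m).
  rewrite !zshift_zshift. lia.
Qed.

Lemma iter_zshift_4 m : Nat.iter 4 zshift m = 3 * zshift m + 2 * m.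
Proof.
  change (zshift (zshift (zshift (zshift m))) = 3 * zshift m + 2 * m).
  rewrite !zshift_zshift. lia.
Qed.

Open Scope R_scope.

Definition tau : R := phi - 1.

Lemma tau_sq : tau * tau = 1 - tau.
Proof.
  pose proof (sqrt_sqrt 5 ltac:(lra)). unfold tau, phi. nra.
Qed.

Lemma tau_bounds : 0 < tau < 1.
Proof.
  pose proof (sqrt_sqrt 5 ltac:(lra)). pose proof (sqrt_pos 5).
  assert (2 < sqrt 5 < 3) by nra. unfold tau, phi. lra.
Qed.

Lemma tau_pow_pos n : 0 < tau ^ n.
Proof. apply pow_lt, tau_bounds. Qed.

Lemma tau_pow_le m n : (m <= n)%nat -> tau ^ n <= tau ^ m.
Proof.
  pose proof tau_bounds. induction 1 as [|n _ IH]; [lra|].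
  pose proof (tau_pow_pos n). cbn. nra.
Qed.

Lemma pow_opp_cases x n : (- x) ^ n = x ^ n \/ (- x) ^ n = - x ^ n.
Proof. induction n as [|n [IH|IH]]; cbn; [left| right| left]; rewrite ?IH; ring. Qed.

(* Binet: the conjugate root of X^2 - X - 1 is -tau. *)
Lemma fib_S_sub_phi n : INR (fib (S n)) - phi * INR (fib n) = (- tau) ^ n.
Proof.
  induction n as [n IH] using lt_wf_ind.
  destruct n as [|[|n]]; [cbn; lra|cbn; unfold tau; lra|].
  rewrite (fib_SS (S n)), (fib_SS n), !plus_INR.
  specialize (IH (S n) ltac:(lia)) as IH1. specialize (IH n ltac:(lia)).
  rewrite fib_SS, plus_INR in IH1.
  replace ((- tau) ^ S (S n)) with ((- tau) ^ n * (tau * tau)) by (cbn; ring).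
  replace ((- tau) ^ S n) with ((- tau) ^ n * (- tau)) in IH1 by (cbn; ring).
  rewrite tau_sq. lra.
Qed.

Fixpoint conj_sum (l : list nat) : R :=
  match l with
  | [] => 0
  | a :: l => (- tau) ^ a + conj_sum l
  end.

Lemma fibsum_shift_sub_phi l :
  INR (fibsum (map S l)) - phi * INR (fibsum l) = conj_sum l.
Proof.
  induction l as [|a l IH]; [cbn; lra|].
  cbn [map conj_sum]. rewrite !fibsum_cons, !plus_INR, <- fib_S_sub_phi. lra.
Qed.

(* The extremal admissible words below index K are 2,4,6,... and 3,5,7,...,
   whose sums telescope through tau^(a+2) = tau^a - tau^(a+1). *)
Lemma conj_sum_bounds l K : admissible l -> (2 <= K)%nat ->
  (forall y, In y l -> (y < K)%nat) ->
  - tau ^ 2 + tau ^ K <= conj_sum l <= tau - tau ^ K.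
Proof.
  intros Hl. revert K.
  pose proof tau_bounds. pose proof tau_sq.
  induction Hl as [|a l Ha Hgap Hl IH]; intros K HK Hlt; cbn [conj_sum].
  - pose proof (tau_pow_le 2 K HK). cbn in *. nra.
  - assert (HaK : (a < K)%nat) by (apply Hlt; cbn; auto).
    destruct (Nat.eq_dec a 2) as [->|Ha2].
    + destruct l as [|y l].
      2:{ pose proof (admissible_ge2 _ _ Hl (or_introl eq_refl)).
          specialize (Hgap y (or_introl eq_refl)). lia. }
      pose proof (tau_pow_le 3 K ltac:(lia)). cbn in *. nra.
    + destruct a as [|b]; [lia|].
      destruct (IH b) as [Hlo Hhi]; [lia|intros y Hy; specialize (Hgap y Hy); lia|].
      pose proof (tau_pow_le (S (S b)) K ltac:(lia)).
      pose proof (tau_pow_le b K ltac:(lia)).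
      pose proof (tau_pow_pos (S b)).
      assert (tau ^ S (S b) = tau ^ b - tau ^ S b).
      { replace (tau ^ S (S b)) with (tau ^ b * (tau * tau)) by (cbn; ring).
        rewrite tau_sq. cbn. ring. }
      destruct (pow_opp_cases tau (S b)) as [-> | ->]; lra.
Qed.

Lemma conj_sum_strict l : admissible l -> - tau ^ 2 < conj_sum l < tau.
Proof.
  intros Hl. destruct (conj_sum_bounds l (S (S (list_max l))) Hl) as [Hlo Hhi]; [lia| |].
  - intros y Hy. assert (Hmax : (list_max l <= list_max l)%nat) by lia.
    rewrite list_max_le, Forall_forall in Hmax. specialize (Hmax y Hy). lia.
  - pose proof (tau_pow_pos (S (S (list_max l)))). lra.
Qed.

Lemma zshift_bounds n : INR (zshift n) + 1 < INR (S n) * phi < INR (zshift n) + 2.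
Proof.
  pose proof (fibsum_shift_sub_phi (zeck n)) as Hconj.
  fold (zshift n) in Hconj. rewrite fibsum_zeck in Hconj.
  pose proof (conj_sum_strict _ (admissible_zeck n)).
  assert (tau ^ 2 = 1 - tau) by (rewrite <- tau_sq; ring).
  rewrite S_INR. unfold tau in *. lra.
Qed.

Lemma floor_zshift n : floorR (INR (S n) * phi) = (Z.of_nat (zshift n) + 1)%Z.
Proof.
  symmetry. apply Int_part_spec. rewrite plus_IZR, <- INR_IZR_INZ.
  pose proof (zshift_bounds n). lra.
Qed.

Lemma zshift_lt_S n : (zshift n < zshift (S n))%nat.
Proof.
  pose proof (zshift_bounds n). pose proof (zshift_bounds (S n)).
  pose proof tau_bounds. apply INR_lt. rewrite (S_INR (S n)) in *. unfold tau in *. lra.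
Qed.
Close Scope R_scope.

Section Enumeration.

Variables (P : nat -> bool) (f : nat -> nat).
Hypothesis f_lt_S : forall m, f m < f (S m).
Hypothesis P_iff : forall x, P x = true <-> exists m, x = f m.

Lemma enum_le_mono a b : a <= b -> f a <= f b.
Proof. induction 1; [lia|]. specialize (f_lt_S m). lia. Qed.

Lemma enum_gap m k : f m < f k -> f k < f (S m) -> False.
Proof.
  intros H1 H2. destruct (Nat.le_gt_cases k m) as [Hk|Hk].
  - pose proof (enum_le_mono _ _ Hk). lia.
  - pose proof (enum_le_mono (S m) k Hk). lia.
Qed.

Lemma filter_seq_nil a d : (forall x, a <= x < a + d -> P x = false) ->
  filter P (seq a d) = [].
Proof.
  revert a. induction d as [|d IH]; intros a HP; [reflexivity|].
  cbn. rewrite HP by lia. apply IH. intros x Hx. apply HP. lia.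
Qed.

Lemma count_enum m : length (filter P (seq 0 (f m))) = m.
Proof.
  induction m as [|m IH].
  - rewrite filter_seq_nil; [reflexivity|].
    intros x Hx. destruct (P x) eqn:E; [|reflexivity].
    apply P_iff in E as [k ->]. pose proof (enum_le_mono 0 k ltac:(lia)). lia.
  - specialize (f_lt_S m) as Hlt.
    replace (f (S m)) with (f m + S (f (S m) - S (f m))) by lia.
    rewrite seq_app, filter_app, length_app, IH. cbn [seq filter Nat.add].
    replace (P (f m)) with true by (symmetry; apply P_iff; exists m; reflexivity).
    rewrite filter_seq_nil; [cbn; lia|].
    intros x Hx. destruct (P x) eqn:E; [|reflexivity].
    apply P_iff in E as [k ->]. exfalso. apply (enum_gap m k); lia.
Qed.

Lemma nth_smallest_enum m : is_nth_smallest P (S m) (f m).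
Proof.
  split; [apply P_iff; eauto|]. rewrite count_enum. lia.
Qed.

End Enumeration.

Lemma incr_pt_nth m : is_nth_smallest incr_pt (S m) (zshift m + m).
Proof.
  apply (nth_smallest_enum _ (fun m => zshift m + m)).
  - intros k. pose proof (zshift_lt_S k). lia.
  - intros x. rewrite incr_pt_iff.
    split; intros [k Hk]; exists k; rewrite iter_zshift_2 in *; lia.
Qed.

Lemma decr_pt_nth m : is_nth_smallest decr_pt (S m) (2 * zshift (S m) + m).
Proof.
  apply (nth_smallest_enum _ (fun m => 2 * zshift (S m) + m)).
  - intros k. pose proof (zshift_lt_S (S k)). lia.
  - intros x. rewrite decr_pt_iff.
    split; intros [k Hk]; exists k; rewrite iter_zshift_3 in *; lia.
Qed.

Theorem theorem2 :
  (* (i) *)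
  (forall n : nat, (1 <= n)%nat ->
     exists x : nat, is_nth_smallest incr_pt n x /\
       Z.of_nat x = (floorR (INR n * phi) + Z.of_nat n - 2)%Z)
  /\
  (* (ii) *)
  (forall N : nat, const_pt N = true <->
     exists n : nat, (1 <= n)%nat /\
       (Z.of_nat N = (2 * floorR (INR n * phi) + Z.of_nat n - 2)%Z \/
        Z.of_nat N = (3 * floorR (INR n * phi) + 2 * Z.of_nat n - 3)%Z))
  /\
  (* (iii) : D_Z(1) = -1 equals the formula at n = 1, and for n >= 1,
     D_Z(n+1) = the n-th smallest point of decrease *)
  ((-1)%Z = (2 * floorR (INR 1 * phi) + Z.of_nat 1 - 4)%Z /\
   forall n : nat, (1 <= n)%nat ->
     exists x : nat, is_nth_smallest decr_pt n x /\
       Z.of_nat x = (2 * floorR (INR (S n) * phi) + Z.of_nat (S n) - 4)%Z).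
Proof.
  split; [|split; [|split]].
  - intros [|m] Hn; [lia|]. exists (zshift m + m).
    split; [apply incr_pt_nth|]. rewrite floor_zshift. lia.
  - intros N. rewrite const_pt_iff. split.
    + intros [[m Hm]|[m Hm]]; exists (S m); rewrite floor_zshift;
        rewrite ?iter_zshift_3, ?iter_zshift_4 in Hm; lia.
    + intros [[|m] [Hn Hm]]; [lia|]. rewrite floor_zshift in Hm.
      destruct Hm; [left|right]; exists m;
        rewrite ?iter_zshift_3, ?iter_zshift_4; lia.
  - rewrite (floor_zshift 0). reflexivity.
  - intros [|m] Hn; [lia|]. exists (2 * zshift (S m) + m).
    split; [apply decr_pt_nth|]. rewrite floor_zshift. lia.
Qed.
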